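(* Let $E,F,G$ be Banach spaces over $\mathbb{K}$. (a) Let $P\in\mathcal{P}(^mE;F)$ be a surjective polynomial. If either $n=1$, or $n$ is odd and $\mathbb{K}=\mathbb{R}$, then $\Delta^n_kP$ is injective for every $k\in\mathbb{N}$. (b) If $j\colon G\to E$ is a metric surjection, then $\Delta^1_kj\colon\mathcal{P}(^kE)\to\mathcal{P}(^kG)$ is a metric injection for every $k\in\mathbb{N}$. (c) If $u\in\mathcal{L}(E;F)$ is an isomorphism (respectively, an isometric isomorphism), then for every $k\in\mathbb{N}$, $\Delta^1_ku$ is an isomorphism (respectively, an isometric isomorphism) and $(\Delta^1_ku)^{-1}=\Delta^1_k(u^{-1})$.
   Context: Banach spaces are over $\mathbb{K}=\mathbb{R}$ or $\mathbb{C}$. $\mathcal{P}(^jX;Y)$ is the Banach space of continuous $j$-homogeneous polynomials $X\to Y$ with sup norm, $\mathcal{P}(^jX)=\mathcal{P}(^jX;\mathbb{K})$, and $\mathcal{L}(X;Y)$ the bounded linear operators (linear operators are $1$-homogeneous polynomials). For $P\in\mathcal{P}(^mE;F)$ and $n,k\in\mathbb{N}$, $\Delta^n_kP\colon\mathcal{P}(^kF)\to\mathcal{P}(^{mnk}E)$ is defined by $\Delta^n_kP(q)(x)=q(P(x))^n$. A metric surjection is a bounded linear operator $j\colon G\to E$ mapping the open unit ball of $G$ onto the open unit ball of $E$; a metric injection is a linear isometric embedding. *)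

From mathcomp Require Import all_boot all_order all_algebra.
From mathcomp Require Import all_classical all_reals all_analysis.
From mathcomp Require Export complex.
Import numFieldNormedType.Exports.
Set Implicit Arguments. Unset Strict Implicit. Unset Printing Implicit Defensive.
Import Order.TTheory GRing.Theory Num.Theory.
Local Open Scope ring_scope.
Local Open Scope classical_set_scope.

Section Polys.
Variable K : numFieldType.

Definition upd (X : Type) (j : nat) (v : 'I_j -> X) (i : 'I_j) (x : X) : 'I_j -> X :=
  fun l => if l == i then x else v l.

Definition multilinear (X Y : lmodType K) (j : nat) (A : ('I_j -> X) -> Y) : Prop :=
  forall (i : 'I_j) (v : 'I_j -> X) (a : K) (x y : X),
    A (upd v i (a *: x + y)) = a *: A (upd v i x) + A (upd v i y).

Definition hpoly (X Y : lmodType K) (j : nat) (P : X -> Y) : Prop :=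
  exists A : ('I_j -> X) -> Y, multilinear A /\ forall x, P x = A (fun _ => x).

Definition cpoly (X Y : normedModType K) (j : nat) (P : X -> Y) : Prop :=
  hpoly j P /\ continuous P.

Definition is_sup_norm (X : normedModType K) (q : X -> K^o) (c : K) : Prop :=
  (forall x : X, `|x| <= 1 -> `|q x| <= c) /\
  (forall d : K, (forall x : X, `|x| <= 1 -> `|q x| <= d) -> c <= d).

Definition polynorm (X : normedModType K) (q : X -> K^o) : K :=
  xget 0 [set c | is_sup_norm q c].

(* Part (a); Kreal records whether K is the real field *)
Definition thm6_a (Kreal : bool) (E F : completeNormedModType K) : Prop :=
  forall (m n k : nat) (P : E -> F),
    cpoly m P -> (forall y : F, exists x : E, P x = y) ->
    (n = 1%N \/ (odd n /\ Kreal)) ->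
    forall q1 q2 : F -> K^o, cpoly k q1 -> cpoly k q2 ->
      (fun x => q1 (P x) ^+ n) = (fun x => q2 (P x) ^+ n) -> q1 = q2.

Definition thm6_b (E G : completeNormedModType K) : Prop :=
  forall j : {linear G -> E}, continuous j ->
    j @` [set x | `|x| < 1] = [set y | `|y| < 1] ->
    forall (k : nat) (q : E -> K^o), cpoly k q ->
      cpoly k (q \o j) /\ polynorm (q \o j) = polynorm q.

Definition thm6_c (E F : completeNormedModType K) : Prop :=
  forall (u : {linear E -> F}) (v : F -> E),
    continuous u -> continuous v -> cancel u v -> cancel v u ->
    forall k : nat,
      ((forall q : F -> K^o, cpoly k q -> cpoly k (q \o u)) /\
       (forall q : E -> K^o, cpoly k q -> cpoly k (q \o v)) /\
       (forall q : F -> K^o, (q \o u) \o v = q) /\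
       (forall q : E -> K^o, (q \o v) \o u = q) /\
       (exists C : K, forall q : F -> K^o, cpoly k q ->
          polynorm (q \o u) <= C * polynorm q) /\
       (exists C : K, forall q : E -> K^o, cpoly k q ->
          polynorm (q \o v) <= C * polynorm q)) /\
      ((forall x : E, `|u x| = `|x|) ->
         (forall q : F -> K^o, cpoly k q -> polynorm (q \o u) = polynorm q) /\
         (forall q : E -> K^o, cpoly k q -> polynorm (q \o v) = polynorm q)).

End Polys.

From mathcomp Require Import all_boot all_order all_algebra.
From mathcomp Require Import all_classical all_reals all_analysis.
From mathcomp Require Import complex.
Import numFieldNormedType.Exports.
Set Implicit Arguments. Unset Strict Implicit. Unset Printing Implicit Defensive.
Import Order.TTheory GRing.Theory Num.Theory.
Local Open Scope ring_scope.
Local Open Scope classical_set_scope.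

(** A k-homogeneous polynomial satisfies q (t x) = t^k q x. Hence its sup over
    the closed unit ball is already determined by the open ball (let t -> 1),
    and a metric surjection, which maps the open ball onto the open ball,
    preserves the sup norm: this is (b). An isometric isomorphism is a metric
    surjection, and composing with a linear map bounded by M on the ball
    multiplies the norm by at most M^k: this is (c). Part (a) only uses the
    surjectivity of P and the injectivity of x |-> x^n for n = 1, or n odd
    over the reals. *)

Section HomogeneousPolynomials.
Variable K : numFieldType.

Lemma multilinear_upd0 (X Y : lmodType K) j (A : ('I_j -> X) -> Y) :
  multilinear A -> forall i v, A (upd v i 0) = 0.
Proof.
move=> hA i v; apply/(addrI (A (upd v i 0))); rewrite addr0.
by have := hA i v 1 0 0; rewrite !scale1r addr0.
Qed.

Lemma multilinearZ (X Y : lmodType K) j (A : ('I_j -> X) -> Y) :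
  multilinear A -> forall i v (a : K) x, A (upd v i (a *: x)) = a *: A (upd v i x).
Proof.
move=> hA i v a x.
by have := hA i v a x 0; rewrite !addr0 multilinear_upd0 // addr0.
Qed.

Lemma hpolyZ (X Y : lmodType K) k (P : X -> Y) :
  hpoly k P -> forall (t : K) x, P (t *: x) = t ^+ k *: P x.
Proof.
move=> [A [hA hP]] t x; rewrite !hP.
pose w m := fun l : 'I_k => if (l < m)%N then t *: x else x.
suff wP m : (m <= k)%N -> A (w m) = t ^+ m *: A (w 0%N).
  by rewrite -[RHS]wP //; congr A; apply/funext => l; rewrite /w ltn_ord.
elim: m => [|m IH] mk; first by rewrite scale1r.
have wS : w m.+1 = upd (w m) (Ordinal mk) (t *: x).
  by apply/funext => l; rewrite /w /upd ltnS leq_eqVlt -val_eqE /=; case: eqP.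
have wE : upd (w m) (Ordinal mk) x = w m.
  by apply/funext => l; rewrite /w /upd -val_eqE /=; case: eqP => // ->; rewrite ltnn.
by rewrite wS multilinearZ // wE (IH (ltnW mk)) scalerA exprS.
Qed.

Lemma hpoly_comp (X Y Z : lmodType K) k (P : Y -> Z) (L : X -> Y) :
  linear L -> hpoly k P -> hpoly k (P \o L).
Proof.
move=> hL [A [hA hP]]; exists (fun w => A (L \o w)).
split=> [i v a x y|x]; last exact: hP.
have updL z : L \o upd v i z = upd (L \o v) i (L z).
  by apply/funext => l; rewrite /upd /=; case: eqP.
by rewrite /= !updL hL hA.
Qed.

Lemma cpoly_comp (X Y : normedModType K) k (q : Y -> K^o) (L : X -> Y) :
  linear L -> continuous L -> cpoly k q -> cpoly k (q \o L).
Proof.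
move=> hL Lc [hq qc]; split; first exact: hpoly_comp.
by move=> x; apply: continuous_comp; [exact: Lc | exact: qc].
Qed.

End HomogeneousPolynomials.

Section Bounds.
Variable K : numFieldType.

Let half_gt0_lt1 : 0 < (2^-1 : K) < 1.
Proof. by rewrite invr_gt0 ltr0n invf_lt1 ?ltr0n // ltr1n. Qed.

Lemma le_of_forall_mulr_lt1 (a d : K) :
  0 <= a -> (forall t, 0 < t < 1 -> t * a <= d) -> a <= d.
Proof.
move=> a0 h.
have d0 : 0 <= d.
  by apply: le_trans (h _ half_gt0_lt1); rewrite mulr_ge0 // invr_ge0 ler0n.
rewrite real_leNgt ?ger0_real //; apply/negP => da.
have a_gt0 : 0 < a := le_lt_trans d0 da.
have [dm ma] := midf_lt da.
have := h ((d + a) / 2 / a).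
rewrite divr_gt0 ?(le_lt_trans d0 dm) // ltr_pdivrMr // mul1r ma divfK ?gt_eqF //.
by move=> /(_ isT) /(lt_le_trans dm); rewrite ltxx.
Qed.

Lemma le_of_forall_exprM_lt1 k (a d : K) :
  0 <= a -> (forall t, 0 < t < 1 -> t ^+ k * a <= d) -> a <= d.
Proof.
elim: k a => [|k IH] a a0 h; first by have := h _ half_gt0_lt1; rewrite mul1r.
apply: IH => // t /andP[t0 t1].
apply: le_of_forall_mulr_lt1 => [|s /andP[s0 s1]].
  by rewrite mulr_ge0 // exprn_ge0 // ltW.
have tk0 : 0 <= t ^+ k by rewrite exprn_ge0 // ltW.
(* s * t ^+ k <= u ^+ k.+1 for u the larger of s and t *)
rewrite mulrA; have [st|ts] := orP (real_leVge (gtr0_real s0) (gtr0_real t0)).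
- apply: le_trans (h t _); last by rewrite t0.
  by rewrite exprS; do 2!apply: ler_wpM2r => //.
- apply: le_trans (h s _); last by rewrite s0.
  rewrite exprS; apply: ler_wpM2r => //; apply: ler_wpM2l; first exact: ltW.
  by rewrite lerXn2r // qualifE /= ltW.
Qed.

Lemma normrZ_lt1 (X : normedModType K) (t : K) (x : X) :
  0 < t < 1 -> `|x| <= 1 -> `|t *: x| < 1.
Proof.
move=> /andP[t0 t1] x1; rewrite normrZ gtr0_norm //.
by apply: le_lt_trans t1; rewrite ler_piMr // ltW.
Qed.

Lemma homogeneous_bounded_on_ball (X Y : normedModType K) k (f : X -> Y) :
  continuous f -> (forall (t : K) x, f (t *: x) = t ^+ k *: f x) ->
  exists2 M : K, 0 < M & forall x, `|x| <= 1 -> `|f x| <= M.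
Proof.
move=> fc fZ; set c := `|f 0| + 1.
have c_gt0 : 0 < c by rewrite ltr_wpDl.
have /nbhs_norm0P[/= e e0 fe] : \forall y \near (0 : X), `|f y| < c.
  by apply: cvgr_norm_lt (fc 0) _ _; rewrite ltrDl.
have [e2_gt0 e2_lt] := midf_lt e0; rewrite add0r in e2_gt0 e2_lt.
have e2k_gt0 : 0 < (e / 2) ^+ k by rewrite exprn_gt0.
exists (c / (e / 2) ^+ k); first by rewrite divr_gt0.
move=> x x1; rewrite ler_pdivlMr // mulrC.
have : `|(e / 2) *: x| < e.
  by rewrite normrZ gtr0_norm // (le_lt_trans _ e2_lt) // ler_piMr // ltW.
by move=> /fe /=; rewrite fZ normrZ normrX gtr0_norm // => /ltW.
Qed.

End Bounds.

Section SupNorm.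
Variable K : numFieldType.

Definition unit_ball_bound (X : normedModType K) (q : X -> K^o) (d : K) :=
  forall x : X, `|x| <= 1 -> `|q x| <= d.

(* The order completeness that makes [polynorm] a genuine supremum; it holds
   for R and for R[i], whose order is only partial. *)
Definition nonneg_sup_complete :=
  forall S : set K, S `<=` [set x | 0 <= x] -> has_sup S -> exists c, supremums S c.

Lemma polynorm_sup (X : normedModType K) k (q : X -> K^o) :
  nonneg_sup_complete -> cpoly k q -> is_sup_norm q (polynorm q).
Proof.
move=> Kcomplete [hq qc]; apply: xgetPex.
have [M _ qM] := homogeneous_bounded_on_ball qc (hpolyZ hq).
have [||c [c_ub c_lub]] := Kcomplete [set `|q x| | x in [set x : X | `|x| <= 1]].
- by move=> ? [x _ <-] /=.
- by split; [exists `|q 0|, 0; rewrite //= normr0 | exists M => ? [x /qM ? <-]].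
exists c; split=> [x x1|d qd]; first by apply: c_ub; exists x.
by apply: c_lub => ? [x /qd ? <-].
Qed.

Lemma eq_polynorm (X Y : normedModType K) (q1 : X -> K^o) (q2 : Y -> K^o) :
  (forall d, unit_ball_bound q1 d <-> unit_ball_bound q2 d) ->
  polynorm q1 = polynorm q2.
Proof.
move=> h; congr (xget 0 _); apply/funext => c; apply/propext.
by split=> -[c_ub c_lub]; split=> [|d /h]; by [apply/h | apply: c_lub].
Qed.

Lemma polynorm_comp_bounded (X Y : normedModType K) k (L : X -> Y) :
  nonneg_sup_complete -> linear L -> continuous L ->
  exists C : K, forall q : Y -> K^o, cpoly k q -> polynorm (q \o L) <= C * polynorm q.
Proof.
move=> Kcomplete hL Lc.
have [M M0 LM] : exists2 M : K, 0 < M & forall x, `|x| <= 1 -> `|L x| <= M.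
  apply: (homogeneous_bounded_on_ball (k := 1)) => // t x.
  by rewrite expr1 (scalable_linear hL).
exists (M ^+ k) => q cq.
have [qb _] := polynorm_sup Kcomplete cq.
have [_ qLlub] := polynorm_sup Kcomplete (cpoly_comp hL Lc cq).
apply: qLlub => x x1 /=.
rewrite -[L x](scalerKV (lt0r_neq0 M0)) (hpolyZ cq.1) normrZ normrX gtr0_norm //.
rewrite ler_pM2l ?exprn_gt0 //; apply: qb.
by rewrite normrZ gtr0_norm ?invr_gt0 // ler_pdivrMl // mulr1 LM.
Qed.

End SupNorm.

Lemma oddX_inj (R : realDomainType) n : odd n -> injective (fun x : R => x ^+ n).
Proof.
move=> n_odd x y /= xy.
have n_gt0 : (0 < n)%N by case: n n_odd {xy}.
have : `|x| == `|y| by rewrite -(eqrXn2 n_gt0) // -!normrX xy.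
rewrite eqr_norm2 => /orP[/eqP // | /eqP x_Ny].
move: xy; rewrite x_Ny exprNn -signr_odd n_odd expr1 mulN1r => /eqP.
rewrite eq_sym -subr_eq0 opprK -mulr2n mulrn_eq0 /= expf_eq0 => /andP[_ /eqP ->].
by rewrite oppr0.
Qed.

Section CompositionOperators.
Variable K : numFieldType.

Lemma polynorm_metric_surjection (X Y : normedModType K) k (j : X -> Y) (q : Y -> K^o) :
  linear j -> j @` [set x | `|x| < 1] = [set y | `|y| < 1] ->
  cpoly k q -> polynorm (q \o j) = polynorm q.
Proof.
move=> hj j_ball [hq _]; apply: eq_polynorm => d; split=> qd.
- move=> y y1; apply: (@le_of_forall_exprM_lt1 _ k) => // t t01.
  have : [set y | `|y| < 1] (t *: y) by exact: normrZ_lt1.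
  rewrite -j_ball => -[x /ltW /qd x_d jx]; move: x_d.
  by rewrite /= jx (hpolyZ hq) normrZ normrX gtr0_norm ?(andP t01).1.
- move=> x x1; apply: qd; apply: le_of_forall_mulr_lt1 => // t t01.
  have : [set y | `|y| < 1] (j (t *: x)).
    by rewrite -j_ball; exists (t *: x); first exact: normrZ_lt1.
  by rewrite /= (scalable_linear hj) normrZ gtr0_norm ?(andP t01).1 // => /ltW.
Qed.

Lemma isometry_open_ball (X Y : normedModType K) (L : X -> Y) (L' : Y -> X) :
  cancel L' L -> (forall x, `|L x| = `|x|) ->
  L @` [set x | `|x| < 1] = [set y | `|y| < 1].
Proof.
move=> L'K L_iso; apply/seteqP; split=> [_ [x /= x1 <-]|y /= y1].
  by rewrite L_iso.
by exists (L' y); rewrite //= -L_iso L'K.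
Qed.

Lemma thm6_a_of_oddX_inj (Kreal : bool) (E F : completeNormedModType K) :
  (Kreal -> forall n, odd n -> injective (fun x : K => x ^+ n)) -> thm6_a Kreal E F.
Proof.
move=> Xn_inj m n k P _ P_surj hn q1 q2 _ _ q12; apply/funext => y.
have [x <-] := P_surj y; have /= := congr1 (@^~ x) q12.
case: hn => [-> | [n_odd Kr]]; first by rewrite !expr1.
exact: Xn_inj.
Qed.

Lemma thm6_b_holds (E G : completeNormedModType K) : thm6_b E G.
Proof.
move=> j jc j_ball k q cq; have jL : linear j := linearP j.
by split; [exact: cpoly_comp | exact: polynorm_metric_surjection jL j_ball cq].
Qed.

Lemma thm6_c_of_nonneg_sup_complete (E F : completeNormedModType K) :
  nonneg_sup_complete K -> thm6_c E F.
Proof.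
move=> Kcomplete u v uc vc uv vu k.
have uL : linear u := linearP u; have vL : linear v := can2_linear uv vu.
split.
  split; first by move=> q; apply: cpoly_comp.
  split; first by move=> q; apply: cpoly_comp.
  split; first by move=> q; apply/funext => y /=; rewrite vu.
  split; first by move=> q; apply/funext => x /=; rewrite uv.
  by split; apply: polynorm_comp_bounded.
move=> u_iso; have v_iso y : `|v y| = `|y| by rewrite -[in RHS](vu y) u_iso.
split=> q cq; apply: polynorm_metric_surjection _ _ cq => //.
- exact: isometry_open_ball vu u_iso.
- exact: isometry_open_ball uv v_iso.
Qed.

End CompositionOperators.

Lemma nonneg_sup_complete_real (R : realType) : nonneg_sup_complete R.
Proof.
move=> S _ S_sup; exists (sup S); split; first exact: sup_upper_bound.
by move=> d; apply: ge_sup S_sup.1.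
Qed.

Lemma nonneg_sup_complete_complex (R : realType) : nonneg_sup_complete R[i].
Proof.
move=> S S_ge0 [[s Ss] [b b_ub]].
have ReK (z : R[i]) : 0 <= z -> ((complex.Re z)%:C)%C = z.
  by move=> z0; rewrite RRe_real // ger0_real.
pose S' := [set r : R | S (r%:C)%C].
have S'_sup : has_sup S'.
  split; first by exists (complex.Re s); rewrite /S' /= ReK // S_ge0.
  by exists (complex.Re b) => r /b_ub; rewrite lecE /= => /andP[].
exists ((sup S')%:C)%C; split=> [z Sz | d d_ub].
  rewrite -(ReK z (S_ge0 _ Sz)) lecR; apply: (sup_upper_bound S'_sup).
  by rewrite /S' /= ReK // S_ge0.
have d0 : 0 <= d := le_trans (S_ge0 _ Ss) (d_ub _ Ss).
rewrite -(ReK d d0) lecR; apply: ge_sup S'_sup.1 _ => r /d_ub.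
by rewrite -(ReK d d0) lecR.
Qed.

Theorem mainTheorem6 (R : realType) :
  (forall E F G : completeNormedModType R,
     thm6_a true E F /\ thm6_b E G /\ thm6_c E F) /\
  (forall E F G : completeNormedModType R[i],
     thm6_a false E F /\ thm6_b E G /\ thm6_c E F).
Proof.
split=> E F G; (split; [|split; [exact: thm6_b_holds|]]).
- by apply: thm6_a_of_oddX_inj => _ n; exact: oddX_inj.
- exact/thm6_c_of_nonneg_sup_complete/nonneg_sup_complete_real.
- exact: thm6_a_of_oddX_inj.
- exact/thm6_c_of_nonneg_sup_complete/nonneg_sup_complete_complex.
Qed.
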